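(* Let $c>1$ and $\Gamma=\{z\mapsto c^nz: n\in\mathbb{Z}\}$. A holomorphic function $F:G\to\mathbb{C}$ satisfies $F(c^nz,c^nw)=F(z,w)$ for all $(z,w)\in G$ and $n\in\mathbb{Z}$ if and only if there is an entire function $g$ with $F(z,w)=g\!\left(\frac{w}{z-w}\right)$ for all $(z,w)\in G$.
   Context: $\hat{\mathbb{C}}=\mathbb{C}\cup\{\infty\}$; $G=\hat{\mathbb{C}}^2\setminus\{(z,z):z\in\hat{\mathbb{C}}\}$. The map $(z,w)\mapsto w/(z-w)$ is understood as the holomorphic map $G\to\mathbb{C}$ obtained by continuous extension (value $0$ at $(\infty,w)$, value $-1$ at $(z,\infty)$); also $c^n\cdot\infty=\infty$. *)

From Stdlib Require Import Reals ZArith.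
From Coquelicot Require Import Coquelicot.
Open Scope R_scope.

Inductive Chat : Type := Fin (z : C) | Inf.

Definition holo1_at (g : C -> C) (z : C) : Prop :=
  exists a : C, forall eps : R, 0 < eps -> exists delta : R, 0 < delta /\
    forall h : C, Cmod h < delta ->
      Cmod (Cminus (Cminus (g (Cplus z h)) (g z)) (Cmult a h)) <= eps * Cmod h.

Definition entire (g : C -> C) : Prop := forall z : C, holo1_at g z.

Definition holo2_at (f : C -> C -> C) (u v : C) : Prop :=
  exists a b : C, forall eps : R, 0 < eps -> exists delta : R, 0 < delta /\
    forall h k : C, Cmod h < delta -> Cmod k < delta ->
      Cmod (Cminus (Cminus (f (Cplus u h) (Cplus v k)) (f u v))
                   (Cplus (Cmult a h) (Cmult b k)))
        <= eps * (Cmod h + Cmod k).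

Definition chart (i : bool) (u : C) : Chat :=
  if i then (if Ceq_dec u (RtoC 0) then Inf else Fin (Cinv u)) else Fin u.

(* G = \hat C^2 minus the diagonal; F : G -> C is represented by a total
   function Chat -> Chat -> C whose values on the diagonal are irrelevant.
   F is holomorphic on G iff in every product chart (u,v) |-> F(chart i u, chart j v)
   is holomorphic on the (open) chart domain {(u,v) | chart i u <> chart j v}. *)
Definition holomorphic_on_G (F : Chat -> Chat -> C) : Prop :=
  forall (i j : bool) (u v : C), chart i u <> chart j v ->
    holo2_at (fun u' v' => F (chart i u') (chart j v')) u v.

Definition scale (r : R) (p : Chat) : Chat :=
  match p with Fin z => Fin (Cmult (RtoC r) z) | Inf => Inf end.

(* (z,w) |-> w/(z-w), continuously extended to G:
   value 0 at (∞,w), value -1 at (z,∞); the diagonal value (∞,∞) is irrelevant. *)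
Definition ratio (p q : Chat) : C :=
  match p, q with
  | Fin z, Fin w => Cdiv w (Cminus z w)
  | Inf, Fin _ => RtoC 0
  | Fin _, Inf => RtoC (-1)
  | Inf, Inf => RtoC 0
  end.

From Stdlib Require Import Reals Lra ZArith ClassicalEpsilon Classical.
From Coquelicot Require Import Coquelicot.
Open Scope R_scope.

(* The converse direction holds because w/(z - w) is unchanged when z and w are
   multiplied by the same positive scalar.  For the direct one put g(t) = F(1 + t, t).  For
   finite z <> w the function mu |-> F(mu z, mu w) is holomorphic on C*, invariant under
   mu |-> c mu, hence bounded (it takes all its values on the annulus 1 <= |mu| <= c) and so
   constant by Liouville's theorem on C*; the latter follows from Cauchy's formula on squares,
   derived from Goursat's lemma by bisection, the puncture at 0 being a bounded singularity.
   Comparing mu = 1 with mu = 1/(z - w) gives F(z, w) = g(w/(z - w)).  At (z, oo) and (oo, w),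
   continuity of F in the charts at (0, oo) and (oo, 0), approached along the orbits
   c^-n (z, oo) and c^n (0, -1), resp. c^-n (oo, w) and c^n (1, 0), gives F(z, oo) = g(-1)
   and F(oo, w) = g(0). *)

Ltac Ceq := apply injective_projections; simpl; try field; try ring.

Lemma Cmod_le_Rabs_re_im (z : C) : Cmod z <= Rabs (fst z) + Rabs (snd z).
Proof.
  destruct z as [x y]; unfold Cmod; simpl.
  pose proof (Rabs_pos x); pose proof (Rabs_pos y).
  rewrite <- (sqrt_Rsqr (Rabs x + Rabs y)) by lra.
  apply sqrt_le_1_alt. pose proof (Rsqr_abs x); pose proof (Rsqr_abs y).
  unfold Rsqr in *. nra.
Qed.

Lemma Cmod_sub_le_Rabs (z w : C) :
  Cmod (z - w)%C <= Rabs (fst z - fst w) + Rabs (snd z - snd w).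
Proof. apply Cmod_le_Rabs_re_im. Qed.

Lemma Rabs_re_im_le_Cmod (z : C) : Rabs (fst z) <= Cmod z /\ Rabs (snd z) <= Cmod z.
Proof.
  pose proof (Rmax_Cmod z).
  pose proof (Rmax_l (Rabs (fst z)) (Rabs (snd z))); pose proof (Rmax_r (Rabs (fst z)) (Rabs (snd z))).
  lra.
Qed.

Lemma Cmod_sub_ge (a b : C) : Cmod a - Cmod b <= Cmod (a - b)%C.
Proof.
  pose proof (Cmod_triangle (a - b)%C b) as T.
  replace (a - b + b)%C with a in T by ring. lra.
Qed.

Lemma Cmod_sub_sym (a b : C) : Cmod (a - b)%C = Cmod (b - a)%C.
Proof. rewrite <- Cmod_opp. f_equal. ring. Qed.

Lemma Cmod_scal (r : R) (z : C) : 0 <= r -> Cmod (r * z)%C = r * Cmod z.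
Proof. intros. rewrite Cmod_mult, Cmod_R, Rabs_right by lra. reflexivity. Qed.

Lemma RtoC_neq_0 (r : R) : r <> 0 -> RtoC r <> 0%C.
Proof. intros H E. apply H. exact (f_equal fst E). Qed.

Definition Ccontinuous_at (h : C -> C) (z : C) : Prop :=
  forall e, 0 < e -> exists d, 0 < d /\
    forall w, Cmod (w - z)%C < d -> Cmod (h w - h z)%C < e.

Lemma holo1_at_ext (f g : C -> C) (z : C) :
  (forall w, f w = g w) -> holo1_at f z -> holo1_at g z.
Proof. intros E [a Ha]. exists a. intros e He. setoid_rewrite <- E. auto. Qed.

Lemma holo1_at_continuous (h : C -> C) (z : C) : holo1_at h z -> Ccontinuous_at h z.
Proof.
  intros [a Ha] e He.
  destruct (Ha 1 Rlt_0_1) as [d [Hd H]].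
  pose proof (Cmod_ge_0 a).
  exists (Rmin d (e / (Cmod a + 2))). split.
  { apply Rmin_pos; auto. apply Rdiv_lt_0_compat; lra. }
  intros w Hw. pose proof (Rmin_l d (e / (Cmod a + 2))). pose proof (Rmin_r d (e / (Cmod a + 2))).
  specialize (H (w - z)%C ltac:(lra)). replace (z + (w - z))%C with w in H by ring.
  pose proof (Cmod_triangle (h w - h z - a * (w - z))%C (a * (w - z))%C) as T.
  replace (h w - h z - a * (w - z) + a * (w - z))%C with (h w - h z)%C in T by ring.
  rewrite Cmod_mult in T. pose proof (Cmod_ge_0 (w - z)%C).
  assert (Cmod (w - z)%C * (Cmod a + 2) < e).
  { apply Rlt_le_trans with (e / (Cmod a + 2) * (Cmod a + 2)).
    - apply Rmult_lt_compat_r; lra.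
    - right; field; lra. }
  nra.
Qed.

Lemma holo1_at_affine (A al z : C) : holo1_at (fun w => A + al * w)%C z.
Proof.
  exists al. intros e He. exists 1. split; [lra|]. intros h Hh.
  replace (A + al * (z + h) - (A + al * z) - al * h)%C with (RtoC 0) by ring.
  rewrite Cmod_0. pose proof (Cmod_ge_0 h). nra.
Qed.

Lemma holo1_at_const (k z : C) : holo1_at (fun _ => k) z.
Proof. apply (holo1_at_ext (fun w => k + 0 * w)%C); [intros; ring | apply holo1_at_affine]. Qed.

Lemma holo1_at_plus (f g : C -> C) (z : C) :
  holo1_at f z -> holo1_at g z -> holo1_at (fun w => f w + g w)%C z.
Proof.
  intros [a Ha] [b Hb]. exists (a + b)%C. intros e He.
  destruct (Ha (e / 2) ltac:(lra)) as [d1 [Hd1 H1]].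
  destruct (Hb (e / 2) ltac:(lra)) as [d2 [Hd2 H2]].
  exists (Rmin d1 d2). split; [apply Rmin_pos; auto|]. intros h Hh.
  pose proof (Rmin_l d1 d2). pose proof (Rmin_r d1 d2).
  specialize (H1 h ltac:(lra)). specialize (H2 h ltac:(lra)).
  pose proof (Cmod_triangle (f (z + h) - f z - a * h)%C (g (z + h) - g z - b * h)%C) as T.
  replace (f (z + h) - f z - a * h + (g (z + h) - g z - b * h))%C
    with (f (z + h) + g (z + h) - (f z + g z) - (a + b) * h)%C in T by ring.
  lra.
Qed.

Lemma holo1_at_scal (f : C -> C) (k z : C) :
  holo1_at f z -> holo1_at (fun w => k * f w)%C z.
Proof.
  intros [a Ha]. exists (k * a)%C. intros e He. pose proof (Cmod_ge_0 k).
  destruct (Ha (e / (Cmod k + 1))) as [d [Hd Hdiff]]; [apply Rdiv_lt_0_compat; lra|].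
  exists d. split; auto. intros h Hh. specialize (Hdiff h Hh).
  replace (k * f (z + h) - k * f z - k * a * h)%C with (k * (f (z + h) - f z - a * h))%C by ring.
  rewrite Cmod_mult. pose proof (Cmod_ge_0 h).
  apply Rle_trans with (Cmod k * (e / (Cmod k + 1) * Cmod h)); [apply Rmult_le_compat_l; auto|].
  assert (Cmod k * (e / (Cmod k + 1)) <= e).
  { apply Rle_trans with ((Cmod k + 1) * (e / (Cmod k + 1))).
    - apply Rmult_le_compat_r; [apply Rlt_le, Rdiv_lt_0_compat|]; lra.
    - right; field; lra. }
  nra.
Qed.

Lemma holo1_at_minus (f g : C -> C) (z : C) :
  holo1_at f z -> holo1_at g z -> holo1_at (fun w => f w - g w)%C z.
Proof.
  intros Hf Hg. apply (holo1_at_ext (fun w => f w + (-1) * g w)%C); [intros; ring|].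
  apply holo1_at_plus; auto. apply holo1_at_scal; auto.
Qed.

Lemma holo1_at_mult_vanishing (f g : C -> C) (z : C) :
  holo1_at f z -> f z = 0%C -> Ccontinuous_at g z -> holo1_at (fun w => f w * g w)%C z.
Proof.
  intros [a Ha] Hf0 Cg. exists (a * g z)%C. intros e He.
  set (Ng := Cmod (g z)); set (Na := Cmod a).
  assert (0 <= Ng /\ 0 <= Na) as [Ng0 Na0] by (split; apply Cmod_ge_0).
  set (e1 := e / (2 * (Ng + 1))); set (e3 := Rmin 1 (e / (2 * (Na + 1)))).
  assert (He1 : 0 < e1) by (apply Rdiv_lt_0_compat; lra).
  assert (He3 : 0 < e3) by (apply Rmin_pos; [lra|apply Rdiv_lt_0_compat; lra]).
  assert (e3 <= 1 /\ e3 <= e / (2 * (Na + 1))) as [E31 E32] by (split; [apply Rmin_l|apply Rmin_r]).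
  destruct (Ha e1 He1) as [d1 [Hd1 H1]], (Cg e3 He3) as [d3 [Hd3 H3]].
  exists (Rmin d1 d3). split; [apply Rmin_pos; auto|].
  intros h Hh. pose proof (Rmin_l d1 d3); pose proof (Rmin_r d1 d3); pose proof (Cmod_ge_0 h).
  specialize (H1 h ltac:(lra)).
  specialize (H3 (z + h)%C). replace (z + h - z)%C with h in H3 by ring. specialize (H3 ltac:(lra)).
  set (R1 := (f (z + h) - f z - a * h)%C) in *; set (D := (g (z + h) - g z)%C) in *.
  replace (f (z + h) * g (z + h) - f z * g z - a * g z * h)%C with (R1 * g (z + h) + a * h * D)%C
    by (unfold R1, D; rewrite Hf0; ring).
  assert (Hg1 : Cmod (g (z + h)%C) <= Ng + 1).
  { replace (g (z + h)%C) with (g z + D)%C by (unfold D; ring).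
    pose proof (Cmod_triangle (g z) D) as T. fold Ng in T. lra. }
  assert (T1 : Cmod R1 * Cmod (g (z + h)%C) <= e / 2 * Cmod h).
  { apply Rle_trans with (e1 * Cmod h * (Ng + 1)).
    - apply Rmult_le_compat; try apply Cmod_ge_0; lra.
    - unfold e1. right. field. lra. }
  assert (T2 : Na * Cmod h * Cmod D <= e / 2 * Cmod h).
  { apply Rle_trans with ((Na + 1) * Cmod h * (e / (2 * (Na + 1)))).
    - apply Rmult_le_compat; try apply Cmod_ge_0; nra.
    - right. field. lra. }
  eapply Rle_trans; [apply Cmod_triangle|]. rewrite !Cmod_mult. fold Na. lra.
Qed.

Lemma holo1_at_mult (f g : C -> C) (z : C) :
  holo1_at f z -> holo1_at g z -> holo1_at (fun w => f w * g w)%C z.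
Proof.
  intros Hf Hg. apply (holo1_at_ext (fun w => (f w - f z) * g w + f z * g w)%C); [intros; ring|].
  apply holo1_at_plus; [apply holo1_at_mult_vanishing | apply holo1_at_scal; auto].
  - apply holo1_at_minus; [auto | apply holo1_at_const].
  - ring.
  - apply holo1_at_continuous, Hg.
Qed.

Lemma holo1_at_inv_sub (p z : C) : z <> p -> holo1_at (fun w => / (w - p))%C z.
Proof.
  intros Hzp. set (w := (z - p)%C).
  assert (Hw : w <> 0%C) by (apply Cminus_eq_contra; auto).
  assert (W : 0 < Cmod w) by (apply Cmod_gt_0; auto).
  set (r := Cmod w * Cmod w * Cmod w).
  assert (0 < r) by (unfold r; repeat apply Rmult_lt_0_compat; auto).
  exists (- / (w * w))%C. intros e He.
  exists (Rmin (Cmod w / 2) (e * r / 2)). split.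
  { apply Rmin_pos; [lra|]. apply Rdiv_lt_0_compat; [apply Rmult_lt_0_compat|]; lra. }
  intros h Hh.
  pose proof (Rmin_l (Cmod w / 2) (e * r / 2)). pose proof (Rmin_r (Cmod w / 2) (e * r / 2)).
  assert (Hwh : Cmod w / 2 <= Cmod (w + h)%C).
  { pose proof (Cmod_sub_ge w (- h)%C) as T. rewrite Cmod_opp in T.
    replace (w - - h)%C with (w + h)%C in T by ring. lra. }
  assert (Hwh0 : (w + h)%C <> 0%C) by (intro E; rewrite E, Cmod_0 in Hwh; lra).
  replace (z + h - p)%C with (w + h)%C by (unfold w; ring). fold w.
  replace (/ (w + h) - / w - - / (w * w) * h)%C with (h * h * / (w * w * (w + h)))%C by (field; auto).
  rewrite Cmod_mult, Cmod_mult, Cmod_inv by (repeat apply Cmult_neq_0; auto).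
  rewrite !Cmod_mult. pose proof (Cmod_ge_0 h).
  apply Rle_trans with (Cmod h * Cmod h * / (r / 2)).
  { apply Rmult_le_compat_l; [nra|]. apply Rinv_le_contravar; [lra|].
    unfold r. assert (0 <= Cmod w * Cmod w) by nra. nra. }
  apply Rle_trans with (Cmod h * (e * r / 2) * / (r / 2)).
  { apply Rmult_le_compat_r; [apply Rlt_le, Rinv_0_lt_compat; lra|]. apply Rmult_le_compat_l; lra. }
  right. field. lra.
Qed.

Lemma holo2_at_line (f : C -> C -> C) (u0 v0 al be s : C) :
  holo2_at f (u0 + al * s)%C (v0 + be * s)%C ->
  holo1_at (fun t => f (u0 + al * t)%C (v0 + be * t)%C) s.
Proof.
  intros [a [b Hab]]. exists (a * al + b * be)%C. intros e He.
  set (S := Cmod al + Cmod be + 1).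
  pose proof (Cmod_ge_0 al); pose proof (Cmod_ge_0 be).
  assert (HS : 0 < S) by (unfold S; lra).
  destruct (Hab (e / S) ltac:(apply Rdiv_lt_0_compat; lra)) as [d [Hd Hdiff]].
  exists (d / S). split; [apply Rdiv_lt_0_compat; lra|].
  intros h Hh. pose proof (Cmod_ge_0 h).
  assert (Hsmall : forall k, Cmod k <= S -> Cmod (k * h)%C < d).
  { intros k Hk. rewrite Cmod_mult.
    apply Rle_lt_trans with (S * Cmod h); [apply Rmult_le_compat_r; auto|].
    apply Rlt_le_trans with (S * (d / S)); [apply Rmult_lt_compat_l; lra|].
    right; field; lra. }
  specialize (Hdiff (al * h)%C (be * h)%C
    ltac:(apply Hsmall; unfold S; lra) ltac:(apply Hsmall; unfold S; lra)).
  replace (u0 + al * (s + h))%C with (u0 + al * s + al * h)%C by ring.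
  replace (v0 + be * (s + h))%C with (v0 + be * s + be * h)%C by ring.
  replace ((a * al + b * be) * h)%C with (a * (al * h) + b * (be * h))%C by ring.
  eapply Rle_trans; [apply Hdiff|]. rewrite !Cmod_mult.
  apply Rle_trans with (e / S * (S * Cmod h)).
  - apply Rmult_le_compat_l; [apply Rlt_le, Rdiv_lt_0_compat; lra|]. unfold S; nra.
  - right; field; lra.
Qed.

Lemma holo2_at_continuous (f : C -> C -> C) (u v : C) : holo2_at f u v ->
  forall e, 0 < e -> exists d, 0 < d /\
    forall h k, Cmod h < d -> Cmod k < d -> Cmod (f (u + h)%C (v + k)%C - f u v)%C < e.
Proof.
  intros [a [b Hab]] e He. destruct (Hab 1 Rlt_0_1) as [d1 [Hd1 H1]].
  set (S := Cmod a + Cmod b + 2).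
  pose proof (Cmod_ge_0 a); pose proof (Cmod_ge_0 b).
  exists (Rmin d1 (e / S)). split; [apply Rmin_pos; auto; apply Rdiv_lt_0_compat; unfold S; lra|].
  intros h k Hh Hk. pose proof (Rmin_l d1 (e / S)). pose proof (Rmin_r d1 (e / S)).
  specialize (H1 h k ltac:(lra) ltac:(lra)).
  pose proof (Cmod_triangle (f (u + h)%C (v + k)%C - f u v - (a * h + b * k))%C (a * h + b * k)%C) as T.
  replace (f (u + h)%C (v + k)%C - f u v - (a * h + b * k) + (a * h + b * k))%C
    with (f (u + h)%C (v + k)%C - f u v)%C in T by ring.
  pose proof (Cmod_triangle (a * h)%C (b * k)%C) as T2. rewrite !Cmod_mult in T2.
  pose proof (Cmod_ge_0 h); pose proof (Cmod_ge_0 k).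
  assert ((Cmod a + 1) * Cmod h < (Cmod a + 1) * (e / S)) by (apply Rmult_lt_compat_l; lra).
  assert ((Cmod b + 1) * Cmod k < (Cmod b + 1) * (e / S)) by (apply Rmult_lt_compat_l; lra).
  assert (HSe : (Cmod a + 1) * (e / S) + (Cmod b + 1) * (e / S) = e) by (unfold S; field; lra).
  lra.
Qed.

(** * Integrals along the boundary of a rectangle *)

Definition CInt (f : R -> C) (a b : R) : C := RInt (V := C_R_CompleteNormedModule) f a b.
Definition ex_CInt (f : R -> C) (a b : R) : Prop := ex_RInt (V := C_R_CompleteNormedModule) f a b.

Lemma CInt_plus (f g : R -> C) (a b : R) : ex_CInt f a b -> ex_CInt g a b ->
  CInt (fun t => f t + g t)%C a b = (CInt f a b + CInt g a b)%C.
Proof. exact (RInt_plus (V := C_R_CompleteNormedModule) f g a b). Qed.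

Lemma CInt_minus (f g : R -> C) (a b : R) : ex_CInt f a b -> ex_CInt g a b ->
  CInt (fun t => f t - g t)%C a b = (CInt f a b - CInt g a b)%C.
Proof. exact (RInt_minus (V := C_R_CompleteNormedModule) f g a b). Qed.

Lemma CInt_const (v : C) (a b : R) : CInt (fun _ => v) a b = ((b - a) * v)%C.
Proof. unfold CInt. rewrite RInt_const. Ceq; unfold scal; simpl; unfold mult; simpl; ring. Qed.

Lemma CInt_ext (f g : R -> C) (a b : R) :
  (forall x, Rmin a b < x < Rmax a b -> f x = g x) -> CInt f a b = CInt g a b.
Proof. apply (RInt_ext (V := C_R_CompleteNormedModule)). Qed.

Lemma CInt_Chasles (f : R -> C) (a b c : R) : ex_CInt f a b -> ex_CInt f b c ->
  (CInt f a b + CInt f b c)%C = CInt f a c.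
Proof. apply (RInt_Chasles (V := C_R_CompleteNormedModule)). Qed.

Lemma is_RInt_Cmult (f : R -> C) (a b : R) (l k : C) :
  is_RInt (V := C_R_NormedModule) f a b l ->
  is_RInt (V := C_R_NormedModule) (fun t => k * f t)%C a b (k * l)%C.
Proof.
  intros H.
  assert (H1 : is_RInt (fun t => fst (f t)) a b (fst l))
    by exact (is_RInt_fct_extend_fst (U := R_NormedModule) (V := R_NormedModule) _ _ _ _ H).
  assert (H2 : is_RInt (fun t => snd (f t)) a b (snd l))
    by exact (is_RInt_fct_extend_snd (U := R_NormedModule) (V := R_NormedModule) _ _ _ _ H).
  destruct k as [kr ki].
  apply (is_RInt_fct_extend_pair (U := R_NormedModule) (V := R_NormedModule)); simpl.
  - replace (kr * fst l - ki * snd l) with (minus (scal kr (fst l)) (scal ki (snd l)))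
      by (unfold minus, plus, opp, scal; simpl; unfold mult; simpl; ring).
    eapply is_RInt_ext;
      [|exact (is_RInt_minus _ _ _ _ _ _ (is_RInt_scal _ _ _ kr _ H1) (is_RInt_scal _ _ _ ki _ H2))].
    intros. unfold minus, plus, opp, scal; simpl. unfold mult; simpl. ring.
  - replace (kr * snd l + ki * fst l) with (plus (scal kr (snd l)) (scal ki (fst l)))
      by (unfold plus, scal; simpl; unfold mult; simpl; ring).
    eapply is_RInt_ext;
      [|exact (is_RInt_plus _ _ _ _ _ _ (is_RInt_scal _ _ _ kr _ H2) (is_RInt_scal _ _ _ ki _ H1))].
    intros. unfold plus, scal; simpl. unfold mult; simpl. ring.
Qed.

Lemma CInt_scal (f : R -> C) (k : C) (a b : R) : ex_CInt f a b ->
  CInt (fun t => k * f t)%C a b = (k * CInt f a b)%C.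
Proof.
  intros Hf. apply (is_RInt_unique (V := C_R_CompleteNormedModule)).
  apply is_RInt_Cmult, (RInt_correct (V := C_R_CompleteNormedModule)), Hf.
Qed.

Lemma CInt_re_im (f : R -> C) (fr fi : R -> R) (a b lr li : R) :
  is_RInt fr a b lr -> is_RInt fi a b li -> (forall t, f t = (fr t, fi t)) ->
  CInt f a b = (lr, li).
Proof.
  intros H1 H2 E. apply (is_RInt_unique (V := C_R_CompleteNormedModule)).
  apply (is_RInt_ext (V := C_R_NormedModule) (fun t => (fr t, fi t))); [intros; rewrite E; auto|].
  apply (is_RInt_fct_extend_pair (U := R_NormedModule) (V := R_NormedModule)); auto.
Qed.

Lemma norm_C_R (z : C) : norm (K := R_AbsRing) (V := C_R_NormedModule) z = Cmod z.
Proof.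
  unfold norm; simpl. unfold prod_norm, Cmod; simpl. f_equal.
  change (norm (fst z)) with (Rabs (fst z)). change (norm (snd z)) with (Rabs (snd z)).
  rewrite !Rmult_1_r, <- !Rabs_mult, !Rabs_right; try ring; apply Rle_ge, Rle_0_sqr.
Qed.

Lemma CInt_norm_le (f : R -> C) (a b M : R) : a <= b -> ex_CInt f a b ->
  (forall t, a <= t <= b -> Cmod (f t) <= M) -> Cmod (CInt f a b) <= (b - a) * M.
Proof.
  intros Hab Hf HM. rewrite <- norm_C_R.
  apply (norm_RInt_le_const (V := C_R_NormedModule) f a b); auto.
  - intros. rewrite norm_C_R. auto.
  - apply (RInt_correct (V := C_R_CompleteNormedModule)), Hf.
Qed.

Lemma ex_CInt_line (h : C -> C) (p v : C) (a b : R) :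
  (forall t, Rmin a b <= t <= Rmax a b -> Ccontinuous_at h (p + t * v)%C) ->
  ex_CInt (fun t => h (p + t * v)%C) a b.
Proof.
  intros Hc. apply (ex_RInt_continuous (V := C_R_CompleteNormedModule)). intros t Ht.
  apply (proj2 (filterlim_locally _ _)). intros eps.
  destruct (Hc t Ht eps (cond_pos eps)) as [d [Hd Hw]].
  pose proof (Cmod_ge_0 v).
  exists (mkposreal (d / (Cmod v + 1)) ltac:(apply Rdiv_lt_0_compat; lra)).
  intros s Hs. simpl in Hs.
  unfold ball in Hs; simpl in Hs; unfold AbsRing_ball, abs, minus, plus, opp in Hs; simpl in Hs.
  apply C_NormedModule_mixin_compat1, Hw.
  replace (p + s * v - (p + t * v))%C with (RtoC (s - t) * v)%C by Ceq.
  rewrite Cmod_mult, Cmod_R. pose proof (Rabs_pos (s - t)).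
  apply Rle_lt_trans with (Rabs (s - t) * (Cmod v + 1)); [nra|].
  apply Rlt_le_trans with (d / (Cmod v + 1) * (Cmod v + 1)).
  - apply Rmult_lt_compat_r; [lra|exact Hs].
  - right; field; lra.
Qed.

Lemma ex_CInt_horizontal (h : C -> C) (y a b : R) : a <= b ->
  (forall t, a <= t <= b -> Ccontinuous_at h (t, y)) -> ex_CInt (fun t => h (t, y)) a b.
Proof.
  intros Hab Hc.
  apply (ex_RInt_ext (V := C_R_NormedModule) (fun t => h ((0, y) + t * (1, 0))%C)).
  { intros t _. f_equal. Ceq. }
  apply ex_CInt_line. rewrite Rmin_left, Rmax_right by lra.
  intros t Ht. replace ((0, y) + t * (1, 0))%C with (t, y) by Ceq. auto.
Qed.

Lemma ex_CInt_vertical (h : C -> C) (x a b : R) : a <= b ->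
  (forall t, a <= t <= b -> Ccontinuous_at h (x, t)) -> ex_CInt (fun t => h (x, t)) a b.
Proof.
  intros Hab Hc.
  apply (ex_RInt_ext (V := C_R_NormedModule) (fun t => h ((x, 0) + t * (0, 1))%C)).
  { intros t _. f_equal. Ceq. }
  apply ex_CInt_line. rewrite Rmin_left, Rmax_right by lra.
  intros t Ht. replace ((x, 0) + t * (0, 1))%C with (x, t) by Ceq. auto.
Qed.

Definition rect_boundary (a b c d : R) (z : C) : Prop :=
  (a <= fst z <= b /\ (snd z = c \/ snd z = d)) \/
  (c <= snd z <= d /\ (fst z = a \/ fst z = b)).

Lemma rect_boundary_in_rect (a b c d : R) (z : C) : a <= b -> c <= d ->
  rect_boundary a b c d z -> a <= fst z <= b /\ c <= snd z <= d.
Proof. intros ? ? [[? [E | E]] | [? [E | E]]]; rewrite E; lra. Qed.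

Lemma rect_boundary_avoid (a b c d : R) (p z : C) : a < fst p < b -> c < snd p < d ->
  rect_boundary a b c d z -> z <> p.
Proof. intros ? ? [[? [E | E]] | [? [E | E]]] ->; lra. Qed.

Ltac on_boundary :=
  unfold rect_boundary; simpl;
  first [left; split; [lra | now auto] | right; split; [lra | now auto]].

Definition rect_integral (h : C -> C) (a b c d : R) : C :=
  (CInt (fun t => h (t, c)) a b + Ci * CInt (fun t => h (b, t)) c d
   - CInt (fun t => h (t, d)) a b - Ci * CInt (fun t => h (a, t)) c d)%C.

Definition continuous_on_rect_boundary (h : C -> C) (a b c d : R) : Prop :=
  forall z, rect_boundary a b c d z -> Ccontinuous_at h z.

Section RectIntegral.
Variables a b c d : R.
Hypotheses (Hab : a <= b) (Hcd : c <= d).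

Lemma ex_CInt_rect_boundary (h : C -> C) : continuous_on_rect_boundary h a b c d ->
  ex_CInt (fun t => h (t, c)) a b /\ ex_CInt (fun t => h (t, d)) a b /\
  ex_CInt (fun t => h (a, t)) c d /\ ex_CInt (fun t => h (b, t)) c d.
Proof.
  intros Hh.
  repeat split; [apply ex_CInt_horizontal | apply ex_CInt_horizontal
                | apply ex_CInt_vertical | apply ex_CInt_vertical];
    auto; intros t Ht; apply Hh; on_boundary.
Qed.

Lemma rect_integral_plus (f g : C -> C) :
  continuous_on_rect_boundary f a b c d -> continuous_on_rect_boundary g a b c d ->
  rect_integral (fun z => f z + g z)%C a b c d = (rect_integral f a b c d + rect_integral g a b c d)%C.
Proof.
  intros Hf Hg.
  destruct (ex_CInt_rect_boundary f Hf) as (F1 & F2 & F3 & F4).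
  destruct (ex_CInt_rect_boundary g Hg) as (G1 & G2 & G3 & G4).
  unfold rect_integral. rewrite !CInt_plus by auto. ring.
Qed.

Lemma rect_integral_minus (f g : C -> C) :
  continuous_on_rect_boundary f a b c d -> continuous_on_rect_boundary g a b c d ->
  rect_integral (fun z => f z - g z)%C a b c d = (rect_integral f a b c d - rect_integral g a b c d)%C.
Proof.
  intros Hf Hg.
  destruct (ex_CInt_rect_boundary f Hf) as (F1 & F2 & F3 & F4).
  destruct (ex_CInt_rect_boundary g Hg) as (G1 & G2 & G3 & G4).
  unfold rect_integral. rewrite !CInt_minus by auto. ring.
Qed.

Lemma rect_integral_scal (f : C -> C) (k : C) : continuous_on_rect_boundary f a b c d ->
  rect_integral (fun z => k * f z)%C a b c d = (k * rect_integral f a b c d)%C.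
Proof.
  intros Hf. destruct (ex_CInt_rect_boundary f Hf) as (F1 & F2 & F3 & F4).
  unfold rect_integral. rewrite !CInt_scal by auto. ring.
Qed.

Lemma rect_integral_ext (f g : C -> C) :
  (forall z, rect_boundary a b c d z -> f z = g z) ->
  rect_integral f a b c d = rect_integral g a b c d.
Proof.
  intros E. unfold rect_integral.
  rewrite (CInt_ext (fun t => f (t, c)) (fun t => g (t, c))),
    (CInt_ext (fun t => f (t, d)) (fun t => g (t, d))),
    (CInt_ext (fun t => f (a, t)) (fun t => g (a, t))),
    (CInt_ext (fun t => f (b, t)) (fun t => g (b, t))); auto;
    rewrite ?Rmin_left, ?Rmax_right by lra; intros x Hx; apply E; on_boundary.
Qed.

Lemma rect_integral_norm_le (h : C -> C) (B : R) : continuous_on_rect_boundary h a b c d ->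
  (forall z, rect_boundary a b c d z -> Cmod (h z) <= B) ->
  Cmod (rect_integral h a b c d) <= 2 * ((b - a) + (d - c)) * B.
Proof.
  intros Hh HB. destruct (ex_CInt_rect_boundary h Hh) as (F1 & F2 & F3 & F4).
  assert (I1 : Cmod (CInt (fun t => h (t, c)) a b) <= (b - a) * B)
    by (apply CInt_norm_le; auto; intros; apply HB; on_boundary).
  assert (I2 : Cmod (CInt (fun t => h (t, d)) a b) <= (b - a) * B)
    by (apply CInt_norm_le; auto; intros; apply HB; on_boundary).
  assert (I3 : Cmod (CInt (fun t => h (a, t)) c d) <= (d - c) * B)
    by (apply CInt_norm_le; auto; intros; apply HB; on_boundary).
  assert (I4 : Cmod (CInt (fun t => h (b, t)) c d) <= (d - c) * B)
    by (apply CInt_norm_le; auto; intros; apply HB; on_boundary).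
  unfold rect_integral.
  set (I1' := CInt (fun t => h (t, c)) a b) in *; set (I2' := CInt (fun t => h (t, d)) a b) in *.
  set (I3' := CInt (fun t => h (a, t)) c d) in *; set (I4' := CInt (fun t => h (b, t)) c d) in *.
  pose proof (Cmod_triangle (I1' + Ci * I4' - I2') (- (Ci * I3'))).
  pose proof (Cmod_triangle (I1' + Ci * I4') (- I2')).
  pose proof (Cmod_triangle I1' (Ci * I4')).
  unfold Cminus in *. rewrite !Cmod_opp, !Cmod_mult, !Cmod_Ci in *.
  lra.
Qed.

Lemma rect_integral_affine (A al : C) : rect_integral (fun z => A + al * z)%C a b c d = 0%C.
Proof.
  assert (Hc : continuous_on_rect_boundary (fun z => A + al * z)%C a b c d)
    by (intros z _; apply holo1_at_continuous, holo1_at_affine).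
  destruct (ex_CInt_rect_boundary _ Hc) as (F1 & F2 & F3 & F4).
  unfold rect_integral.
  match goal with |- (?I1 + Ci * ?I4 - ?I2 - Ci * ?I3)%C = _ =>
    replace (I1 + Ci * I4 - I2 - Ci * I3)%C with (I1 - I2 + Ci * (I4 - I3))%C by ring end.
  rewrite <- !CInt_minus by auto.
  rewrite (CInt_ext _ (fun _ => al * (0, c - d)%R)%C),
    (CInt_ext _ (fun _ => al * (b - a, 0)%R)%C c d)
    by (intros; Ceq).
  rewrite !CInt_const. destruct al. Ceq.
Qed.

End RectIntegral.

Lemma rect_integral_split_x (h : C -> C) (a m b c d : R) : a <= m <= b -> c <= d ->
  continuous_on_rect_boundary h a m c d -> continuous_on_rect_boundary h m b c d ->
  rect_integral h a b c d = (rect_integral h a m c d + rect_integral h m b c d)%C.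
Proof.
  intros Hm Hcd Hl Hr.
  destruct (ex_CInt_rect_boundary a m c d ltac:(lra) Hcd h Hl) as (F1 & F2 & F3 & F4).
  destruct (ex_CInt_rect_boundary m b c d ltac:(lra) Hcd h Hr) as (G1 & G2 & G3 & G4).
  unfold rect_integral.
  rewrite <- (CInt_Chasles (fun t => h (t, c)) a m b), <- (CInt_Chasles (fun t => h (t, d)) a m b)
    by auto.
  ring.
Qed.

Lemma rect_integral_split_y (h : C -> C) (a b c m d : R) : a <= b -> c <= m <= d ->
  continuous_on_rect_boundary h a b c m -> continuous_on_rect_boundary h a b m d ->
  rect_integral h a b c d = (rect_integral h a b c m + rect_integral h a b m d)%C.
Proof.
  intros Hab Hm Hl Hr.
  destruct (ex_CInt_rect_boundary a b c m Hab ltac:(lra) h Hl) as (F1 & F2 & F3 & F4).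
  destruct (ex_CInt_rect_boundary a b m d Hab ltac:(lra) h Hr) as (G1 & G2 & G3 & G4).
  unfold rect_integral.
  rewrite <- (CInt_Chasles (fun t => h (a, t)) c m d), <- (CInt_Chasles (fun t => h (b, t)) c m d)
    by auto.
  ring.
Qed.

Lemma pow_inv_small (c X e : R) : 1 < c -> 0 < e -> exists n, X / c ^ n < e.
Proof.
  intros Hc He. assert (Hinv : Rabs (/ c) < 1).
  { rewrite Rabs_right by (apply Rle_ge, Rlt_le, Rinv_0_lt_compat; lra).
    rewrite <- Rinv_1. apply Rinv_lt_contravar; lra. }
  destruct (pow_lt_1_zero (/ c) Hinv (e / (Rabs X + 1))) as [n Hn].
  { apply Rdiv_lt_0_compat; [lra | pose proof (Rabs_pos X); lra]. }
  exists n. specialize (Hn n (le_n n)). rewrite pow_inv, Rabs_right in Hn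
    by (apply Rle_ge, Rlt_le, Rinv_0_lt_compat, pow_lt; lra).
  assert (0 < / c ^ n) by (apply Rinv_0_lt_compat, pow_lt; lra).
  pose proof (Rle_abs X); pose proof (Rabs_pos X).
  apply Rle_lt_trans with (Rabs X * / c ^ n); [apply Rmult_le_compat_r; lra|].
  apply Rle_lt_trans with ((Rabs X + 1) * / c ^ n); [nra|].
  apply Rlt_le_trans with ((Rabs X + 1) * (e / (Rabs X + 1))); [apply Rmult_lt_compat_l; lra|].
  right; field; lra.
Qed.

Lemma nested_intervals (a b : nat -> R) :
  Un_growing a -> Un_decreasing b -> (forall k, a k <= b k) ->
  exists u, forall k, a k <= u <= b k.
Proof.
  intros Ha Hb Hab.
  assert (Hjk : forall j k, a j <= b k).
  { intros j k. destruct (Nat.le_ge_cases j k).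
    - apply Rle_trans with (a k); [apply Rge_le, growing_prop | ]; auto.
    - apply Rle_trans with (b j); [ | apply decreasing_prop]; auto. }
  destruct (completeness (fun x => exists k, x = a k)) as [u [Hub Hlub]].
  - exists (b O). intros x [k ->]. auto.
  - exists (a O). eauto.
  - exists u. intros k. split.
    + apply Hub. eauto.
    + apply Hlub. intros x [j ->]. auto.
Qed.

(** * Proofs by bisection of rectangles *)

Record rect := Rect { rxl : R; rxr : R; ryl : R; ryr : R }.

Section Bisection.
Variable P : R -> R -> R -> R -> Prop.
Variables x0 x1 y0 y1 : R.

Hypothesis P_quarters : forall a b c d,
  x0 <= a <= b -> b <= x1 -> y0 <= c <= d -> d <= y1 ->
  let m := (a + b) / 2 in let n := (c + d) / 2 in
  P a m c n -> P m b c n -> P a m n d -> P m b n d -> P a b c d.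

Hypothesis P_local : forall u v, x0 <= u <= x1 -> y0 <= v <= y1 ->
  exists del, 0 < del /\ forall a b c d,
    x0 <= a <= u -> u <= b <= x1 -> y0 <= c <= v -> v <= d <= y1 ->
    b - a < del -> d - c < del -> P a b c d.

Definition bad_quarter (r : rect) : rect :=
  let (a, b, c, d) := r in
  let m := (a + b) / 2 in let n := (c + d) / 2 in
  if excluded_middle_informative (P a m c n) then
    if excluded_middle_informative (P m b c n) then
      if excluded_middle_informative (P a m n d) then Rect m b n d else Rect a m n d
    else Rect m b c n
  else Rect a m c n.

Definition bad_rect_at (k : nat) (r : rect) : Prop :=
  x0 <= rxl r <= rxr r /\ rxr r <= x1 /\ y0 <= ryl r <= ryr r /\ ryr r <= y1 /\
  rxr r - rxl r = (x1 - x0) / 2 ^ k /\ ryr r - ryl r = (y1 - y0) / 2 ^ k /\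
  ~ P (rxl r) (rxr r) (ryl r) (ryr r).

Lemma bad_quarter_spec (k : nat) (r : rect) : bad_rect_at k r ->
  bad_rect_at (S k) (bad_quarter r) /\
  rxl r <= rxl (bad_quarter r) /\ rxr (bad_quarter r) <= rxr r /\
  ryl r <= ryl (bad_quarter r) /\ ryr (bad_quarter r) <= ryr r.
Proof.
  destruct r as [a b c d]. intros (H1 & H2 & H3 & H4 & H5 & H6 & HnP); simpl in *.
  assert (0 < 2 ^ k) by (apply pow_lt; lra).
  assert (E1 : (x1 - x0) / 2 ^ S k = (b - a) / 2) by (rewrite H5; simpl; field; lra).
  assert (E2 : (y1 - y0) / 2 ^ S k = (d - c) / 2) by (rewrite H6; simpl; field; lra).
  pose proof (P_quarters a b c d H1 H2 H3 H4) as Hq. simpl in Hq.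
  unfold bad_rect_at. rewrite E1, E2. unfold bad_quarter.
  repeat destruct excluded_middle_informative; simpl;
    repeat split; try lra; tauto.
Qed.

Fixpoint bad_rect (k : nat) : rect :=
  match k with O => Rect x0 x1 y0 y1 | S k' => bad_quarter (bad_rect k') end.

Theorem rect_bisection : x0 <= x1 -> y0 <= y1 -> P x0 x1 y0 y1.
Proof.
  intros Hx Hy. apply NNPP. intro HnP.
  assert (Hbad : forall k, bad_rect_at k (bad_rect k)).
  { induction k as [|k IH].
    - unfold bad_rect_at; simpl. repeat split; auto; lra.
    - apply bad_quarter_spec, IH. }
  assert (Hstep := fun k => proj2 (bad_quarter_spec k _ (Hbad k))).
  destruct (nested_intervals (fun k => rxl (bad_rect k)) (fun k => rxr (bad_rect k))) as [u Hu].
  { intros k. apply Hstep. } { intros k. apply Hstep. } { intros k. apply Hbad. }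
  destruct (nested_intervals (fun k => ryl (bad_rect k)) (fun k => ryr (bad_rect k))) as [v Hv].
  { intros k. apply Hstep. } { intros k. apply Hstep. } { intros k. apply Hbad. }
  pose proof (Hu O) as Hu0; pose proof (Hv O) as Hv0; simpl in Hu0, Hv0.
  destruct (P_local u v ltac:(lra) ltac:(lra)) as [del [Hdel Hloc]].
  destruct (pow_inv_small 2 (Rmax (x1 - x0) (y1 - y0)) del ltac:(lra) Hdel) as [k Hk].
  destruct (Hbad k) as (H1 & H2 & H3 & H4 & H5 & H6 & HnPk).
  assert (Hsmall : forall s, s <= Rmax (x1 - x0) (y1 - y0) -> s / 2 ^ k < del).
  { intros s Hs. apply Rle_lt_trans with (Rmax (x1 - x0) (y1 - y0) / 2 ^ k); auto.
    apply Rmult_le_compat_r; auto. apply Rlt_le, Rinv_0_lt_compat, pow_lt; lra. }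
  apply HnPk, Hloc; try (specialize (Hu k); specialize (Hv k); simpl in *; lra).
  - rewrite H5. apply Hsmall, Rmax_l.
  - rewrite H6. apply Hsmall, Rmax_r.
Qed.

End Bisection.

(** * Cauchy's theorem on rectangles *)

Lemma C_eq_0_of_small (z : C) : (forall eps, 0 < eps -> Cmod z <= eps) -> z = 0%C.
Proof.
  intros H. apply Cmod_eq_0, Rle_antisym; [|apply Cmod_ge_0].
  apply Rle_plus_epsilon. intros. rewrite Rplus_0_l. auto.
Qed.

Definition holo_on_rect (h : C -> C) (a b c d : R) : Prop :=
  forall z, a <= fst z <= b -> c <= snd z <= d -> holo1_at h z.

Lemma holo_on_rect_continuous (h : C -> C) (a b c d : R) : a <= b -> c <= d ->
  holo_on_rect h a b c d -> continuous_on_rect_boundary h a b c d.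
Proof.
  intros Hab Hcd Hh z Hz. apply holo1_at_continuous.
  destruct (rect_boundary_in_rect a b c d z Hab Hcd Hz). auto.
Qed.

Lemma holo_on_subrect (h : C -> C) (a b c d a' b' c' d' : R) :
  a <= a' -> b' <= b -> c <= c' -> d' <= d ->
  holo_on_rect h a b c d -> holo_on_rect h a' b' c' d'.
Proof. intros ? ? ? ? Hh z ? ?. apply Hh; lra. Qed.

(* On a small rectangle around a point of holomorphy, h differs from its tangent affine map by
   o(size), and the affine map integrates to zero. *)
Lemma rect_integral_small (h : C -> C) (z0 : C) (e : R) : holo1_at h z0 -> 0 < e ->
  exists del, 0 < del /\ forall a b c d,
    a <= fst z0 <= b -> c <= snd z0 <= d -> b - a < del -> d - c < del ->
    holo_on_rect h a b c d ->
    Cmod (rect_integral h a b c d) <= e * ((b - a) + (d - c)) ^ 2.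
Proof.
  intros [al Hal] He.
  destruct (Hal (e / 2) ltac:(lra)) as [del [Hdel Hd]].
  exists (del / 2). split; [lra|].
  intros a b c d Hu Hv Wx Wy Hh.
  set (L := fun z => (h z0 - al * z0 + al * z)%C).
  assert (HL : continuous_on_rect_boundary L a b c d)
    by (intros z _; apply holo1_at_continuous, holo1_at_affine).
  assert (HhL : continuous_on_rect_boundary (fun z => h z - L z)%C a b c d).
  { intros z Hz. apply holo1_at_continuous, holo1_at_minus; [|apply holo1_at_affine].
    destruct (rect_boundary_in_rect a b c d z ltac:(lra) ltac:(lra) Hz). auto. }
  replace (rect_integral h a b c d) with (rect_integral (fun z => h z - L z)%C a b c d).
  2:{ assert (continuous_on_rect_boundary h a b c d) by (apply holo_on_rect_continuous; auto; lra).
      rewrite rect_integral_minus by (auto; lra). unfold L. rewrite rect_integral_affine by lra. ring. }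
  replace (e * ((b - a) + (d - c)) ^ 2)
    with (2 * ((b - a) + (d - c)) * (e / 2 * ((b - a) + (d - c)))) by field.
  apply rect_integral_norm_le; auto; try lra.
  intros z Hz. destruct (rect_boundary_in_rect a b c d z ltac:(lra) ltac:(lra) Hz).
  specialize (Hd (z - z0)%C).
  replace (z0 + (z - z0))%C with z in Hd by ring.
  replace (h z - L z)%C with (h z - h z0 - al * (z - z0))%C by (unfold L; ring).
  assert (Hdist : Cmod (z - z0)%C <= (b - a) + (d - c)).
  { eapply Rle_trans; [apply Cmod_sub_le_Rabs|].
    assert (Rabs (fst z - fst z0) <= b - a) by (apply Rabs_le; lra).
    assert (Rabs (snd z - snd z0) <= d - c) by (apply Rabs_le; lra). lra. }
  eapply Rle_trans; [apply Hd; lra|]. apply Rmult_le_compat_l; lra.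
Qed.

(* The bound eps (b - a + d - c)^2 is the sum of the same bounds for the four quarters. *)
Theorem rect_integral_holo_eq_0 (h : C -> C) (a b c d : R) : a <= b -> c <= d ->
  holo_on_rect h a b c d -> rect_integral h a b c d = 0%C.
Proof.
  intros Hab Hcd Hh. apply C_eq_0_of_small. intros eps Heps.
  set (K := ((b - a) + (d - c)) ^ 2 + 1).
  assert (HK : 0 < K) by (unfold K; pose proof (pow2_ge_0 ((b - a) + (d - c))); lra).
  assert (Hbound : Cmod (rect_integral h a b c d) <= eps / K * ((b - a) + (d - c)) ^ 2).
  { apply (rect_bisection (fun a' b' c' d' =>
      Cmod (rect_integral h a' b' c' d') <= eps / K * ((b' - a') + (d' - c')) ^ 2)); auto.
    - intros a' b' c' d' Hx1 Hx2 Hy1 Hy2 m n Q1 Q2 Q3 Q4.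
      assert (Hsub : forall p q r s, a <= p <= q -> q <= b -> c <= r <= s -> s <= d ->
        continuous_on_rect_boundary h p q r s).
      { intros p q r s ? ? ? ?. apply holo_on_rect_continuous; try lra.
        apply (holo_on_subrect h a b c d); auto; lra. }
      rewrite (rect_integral_split_x h a' m b') by (unfold m; try lra; apply Hsub; unfold m; lra).
      rewrite (rect_integral_split_y h a' m c' n d'), (rect_integral_split_y h m b' c' n d')
        by (unfold m, n; try lra; apply Hsub; unfold m, n; lra).
      pose proof (Cmod_triangle (rect_integral h a' m c' n) (rect_integral h a' m n d')).
      pose proof (Cmod_triangle (rect_integral h m b' c' n) (rect_integral h m b' n d')).
      pose proof (Cmod_triangle (rect_integral h a' m c' n + rect_integral h a' m n d')
                                (rect_integral h m b' c' n + rect_integral h m b' n d')).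
      unfold m, n in *.
      replace (eps / K * ((b' - a') + (d' - c')) ^ 2) with
        (eps / K * (((a' + b') / 2 - a') + ((c' + d') / 2 - c')) ^ 2
         + eps / K * (((a' + b') / 2 - a') + (d' - (c' + d') / 2)) ^ 2
         + (eps / K * ((b' - (a' + b') / 2) + ((c' + d') / 2 - c')) ^ 2
            + eps / K * ((b' - (a' + b') / 2) + (d' - (c' + d') / 2)) ^ 2)) by (field; lra).
      lra.
    - intros u v Hu Hv.
      destruct (rect_integral_small h (u, v) (eps / K) (Hh (u, v) Hu Hv)) as [del [Hdel Hsmall]].
      { apply Rdiv_lt_0_compat; lra. }
      exists del. split; auto. intros a' b' c' d' Ha' Hb' Hc' Hd' Wx Wy.
      apply Hsmall; simpl; try lra. eapply holo_on_subrect; eauto; lra. }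
  eapply Rle_trans; [exact Hbound|].
  apply Rle_trans with (eps / K * K); [|right; field; lra].
  apply Rmult_le_compat_l; [apply Rlt_le, Rdiv_lt_0_compat; lra | unfold K; lra].
Qed.

Section Frame.
Variables (h : C -> C) (x0 x1 x2 x3 y0 y1 y2 y3 : R).
Hypotheses (Hx : x0 <= x1 <= x2 /\ x2 <= x3) (Hy : y0 <= y1 <= y2 /\ y2 <= y3).

Let inner (z : C) : Prop := x1 < fst z < x2 /\ y1 < snd z < y2.

Hypothesis Hh : forall z, x0 <= fst z <= x3 -> y0 <= snd z <= y3 -> ~ inner z -> holo1_at h z.

Let frame_continuous (p q r s : R) : x0 <= p <= q -> q <= x3 -> y0 <= r <= s -> s <= y3 ->
  (forall z, rect_boundary p q r s z -> ~ inner z) -> continuous_on_rect_boundary h p q r s.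
Proof.
  intros ? ? ? ? Hout z Hz. apply holo1_at_continuous.
  destruct (rect_boundary_in_rect p q r s z ltac:(lra) ltac:(lra) Hz). apply Hh; auto; lra.
Qed.

Let frame_piece (p q r s : R) : x0 <= p <= q -> q <= x3 -> y0 <= r <= s -> s <= y3 ->
  (forall z, p <= fst z <= q -> r <= snd z <= s -> ~ inner z) -> rect_integral h p q r s = 0%C.
Proof.
  intros ? ? ? ? Hout. apply rect_integral_holo_eq_0; try lra.
  intros z ? ?. apply Hh; auto; lra.
Qed.

Lemma rect_integral_frame : rect_integral h x0 x3 y0 y3 = rect_integral h x1 x2 y1 y2.
Proof.
  rewrite (rect_integral_split_x h x0 x1 x3), (rect_integral_split_x h x1 x2 x3),
    (rect_integral_split_y h x1 x2 y0 y1 y3), (rect_integral_split_y h x1 x2 y1 y2 y3);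
    try lra; try (apply frame_continuous; try lra;
                  intros z [[? [E | E]] | [? [E | E]]] [? ?]; rewrite E in *; lra).
  rewrite (frame_piece x0 x1 y0 y3), (frame_piece x2 x3 y0 y3), (frame_piece x1 x2 y0 y1),
    (frame_piece x1 x2 y2 y3) by (try lra; intros z ? ? [? ?]; lra).
  ring.
Qed.

End Frame.

Lemma sq_plus_sq_pos (s d : R) : 0 < d -> 0 < s ^ 2 + d ^ 2.
Proof. intros Hd. pose proof (pow2_ge_0 s); pose proof (pow_lt d 2 Hd). lra. Qed.

Lemma is_RInt_atan_kernel (q d : R) : 0 < d ->
  is_RInt (fun t => d / ((t - q) ^ 2 + d ^ 2)) (q - d) (q + d) (PI / 2).
Proof.
  intros Hd.
  replace (PI / 2) with (minus (atan ((q + d - q) / d)) (atan ((q - d - q) / d))).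
  2:{ unfold minus, plus, opp; simpl.
      replace ((q + d - q) / d) with 1 by (field; lra).
      replace ((q - d - q) / d) with (- (1)) by (field; lra).
      rewrite atan_opp, atan_1. field. }
  apply (is_RInt_derive (V := R_CompleteNormedModule) (fun t => atan ((t - q) / d))).
  - intros t _. pose proof (sq_plus_sq_pos (t - q) d Hd).
    auto_derive; [lra|]. field. split; [|lra].
    replace (d * d * (1 + (t + - q) * / d * ((t + - q) * / d * 1))) with ((t - q) ^ 2 + d ^ 2)
      by (field; lra). lra.
  - intros t _. apply (ex_derive_continuous (V := R_CompleteNormedModule)).
    pose proof (sq_plus_sq_pos (t - q) d Hd). auto_derive. simpl in *. lra.
Qed.

Lemma is_RInt_log_kernel (q d : R) : 0 < d ->
  is_RInt (fun t => (t - q) / ((t - q) ^ 2 + d ^ 2)) (q - d) (q + d) 0.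
Proof.
  intros Hd.
  replace 0 with (minus (ln ((q + d - q) ^ 2 + d ^ 2) / 2) (ln ((q - d - q) ^ 2 + d ^ 2) / 2)).
  2:{ replace ((q - d - q) ^ 2) with ((q + d - q) ^ 2) by ring. unfold minus, plus, opp; simpl. ring. }
  apply (is_RInt_derive (V := R_CompleteNormedModule) (fun t => ln ((t - q) ^ 2 + d ^ 2) / 2)).
  - intros t _. pose proof (sq_plus_sq_pos (t - q) d Hd).
    auto_derive; simpl in *; [lra|]. field. lra.
  - intros t _. apply (ex_derive_continuous (V := R_CompleteNormedModule)).
    pose proof (sq_plus_sq_pos (t - q) d Hd). auto_derive. simpl in *. lra.
Qed.

Lemma is_RInt_Ropp (f : R -> R) (a b l : R) : is_RInt f a b l -> is_RInt (fun t => - f t) a b (- l).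
Proof. intros H. exact (is_RInt_opp _ _ _ _ H). Qed.

Lemma rect_integral_inv_sub_square (p1 p2 d : R) : 0 < d ->
  rect_integral (fun z => / (z - (p1, p2)))%C (p1 - d) (p1 + d) (p2 - d) (p2 + d) = (2 * PI * Ci)%C.
Proof.
  intros Hd.
  pose proof (is_RInt_log_kernel p1 d Hd) as L1; pose proof (is_RInt_atan_kernel p1 d Hd) as A1.
  pose proof (is_RInt_log_kernel p2 d Hd) as L2; pose proof (is_RInt_atan_kernel p2 d Hd) as A2.
  assert (Hq : forall s, s ^ 2 + d ^ 2 <> 0) by (intros s; pose proof (sq_plus_sq_pos s d Hd); lra).
  unfold rect_integral.
  rewrite (CInt_re_im _ _ _ _ _ _ _ L1 A1),
    (CInt_re_im _ _ _ _ _ _ _ L1 (is_RInt_Ropp _ _ _ _ A1)),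
    (CInt_re_im _ _ _ _ _ _ _ A2 (is_RInt_Ropp _ _ _ _ L2)),
    (CInt_re_im _ _ _ _ _ _ _ (is_RInt_Ropp _ _ _ _ A2) (is_RInt_Ropp _ _ _ _ L2));
    try (intros t; unfold Cinv, Cminus, Cplus, Copp; simpl; f_equal; field;
         match goal with |- context [(?s * ?s + d * d)] => specialize (Hq s); simpl in Hq; lra end).
  Ceq.
Qed.

Lemma square_inside_rect (p1 p2 x0 x3 y0 y3 : R) : x0 < p1 < x3 -> y0 < p2 < y3 ->
  exists d, 0 < d /\ x0 < p1 - d /\ p1 + d < x3 /\ y0 < p2 - d /\ p2 + d < y3.
Proof.
  intros Hx Hy.
  exists (Rmin (Rmin (p1 - x0) (x3 - p1)) (Rmin (p2 - y0) (y3 - p2)) / 2).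
  pose proof (Rmin_l (Rmin (p1 - x0) (x3 - p1)) (Rmin (p2 - y0) (y3 - p2))).
  pose proof (Rmin_r (Rmin (p1 - x0) (x3 - p1)) (Rmin (p2 - y0) (y3 - p2))).
  pose proof (Rmin_l (p1 - x0) (x3 - p1)); pose proof (Rmin_r (p1 - x0) (x3 - p1)).
  pose proof (Rmin_l (p2 - y0) (y3 - p2)); pose proof (Rmin_r (p2 - y0) (y3 - p2)).
  assert (0 < Rmin (Rmin (p1 - x0) (x3 - p1)) (Rmin (p2 - y0) (y3 - p2)))
    by (repeat apply Rmin_pos; lra).
  repeat split; lra.
Qed.

Lemma rect_integral_inv_sub (a : C) (x0 x3 y0 y3 : R) :
  x0 < fst a < x3 -> y0 < snd a < y3 ->
  rect_integral (fun z => / (z - a))%C x0 x3 y0 y3 = (2 * PI * Ci)%C.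
Proof.
  destruct a as [p1 p2]. simpl. intros Hx Hy.
  destruct (square_inside_rect p1 p2 x0 x3 y0 y3 Hx Hy) as (d & Hd & H1 & H2 & H3 & H4).
  rewrite (rect_integral_frame _ x0 (p1 - d) (p1 + d) x3 y0 (p2 - d) (p2 + d) y3) by
    (try lra; intros z _ _ Hz; apply holo1_at_inv_sub; intro E; rewrite E in Hz; simpl in Hz; lra).
  apply rect_integral_inv_sub_square, Hd.
Qed.

Definition bounded_near (h : C -> C) (p : C) : Prop :=
  exists B r, 0 < r /\ forall z, z <> p -> Cmod (z - p)%C < r -> Cmod (h z) <= B.

(* Shrinking a frame around the singularity makes the integral O(size). *)
Lemma rect_integral_bounded_singularity (h : C -> C) (p : C) (x0 x3 y0 y3 : R) :
  x0 < fst p < x3 -> y0 < snd p < y3 ->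
  (forall z, x0 <= fst z <= x3 -> y0 <= snd z <= y3 -> z <> p -> holo1_at h z) ->
  bounded_near h p -> rect_integral h x0 x3 y0 y3 = 0%C.
Proof.
  destruct p as [p1 p2]. simpl. intros Hx Hy Hh (B & r & Hr & HB).
  destruct (square_inside_rect p1 p2 x0 x3 y0 y3 Hx Hy) as (m & Hm & M1 & M2 & M3 & M4).
  assert (Hsmall : forall d, 0 < d -> d < Rmin m (r / 2) ->
            Cmod (rect_integral h x0 x3 y0 y3) <= 8 * d * (Rabs B + 1)).
  { intros d Hd Hdm. pose proof (Rmin_l m (r / 2)); pose proof (Rmin_r m (r / 2)).
    assert (Hp : forall z, rect_boundary (p1 - d) (p1 + d) (p2 - d) (p2 + d) z -> z <> (p1, p2))
      by (intros z; apply rect_boundary_avoid; simpl; lra).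
    rewrite (rect_integral_frame _ x0 (p1 - d) (p1 + d) x3 y0 (p2 - d) (p2 + d) y3) by
      (try lra; intros z ? ? Hz; apply Hh; auto; intro E; rewrite E in Hz; simpl in Hz; lra).
    replace (8 * d * (Rabs B + 1))
      with (2 * ((p1 + d - (p1 - d)) + (p2 + d - (p2 - d))) * (Rabs B + 1)) by ring.
    apply rect_integral_norm_le; try lra.
    - intros z Hz.
      destruct (rect_boundary_in_rect (p1 - d) (p1 + d) (p2 - d) (p2 + d) z ltac:(lra) ltac:(lra) Hz).
      apply holo1_at_continuous, Hh; try lra. apply Hp, Hz.
    - intros z Hz.
      destruct (rect_boundary_in_rect (p1 - d) (p1 + d) (p2 - d) (p2 + d) z ltac:(lra) ltac:(lra) Hz).
      pose proof (Rle_abs B). apply Rle_trans with B; [|lra]. apply HB; [apply Hp, Hz|].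
      eapply Rle_lt_trans; [apply Cmod_sub_le_Rabs|]. simpl.
      assert (Rabs (fst z - p1) <= d) by (apply Rabs_le; lra).
      assert (Rabs (snd z - p2) <= d) by (apply Rabs_le; lra). lra. }
  apply C_eq_0_of_small. intros eps Heps.
  set (d := Rmin (Rmin m (r / 2) / 2) (eps / (8 * (Rabs B + 1)))).
  pose proof (Rabs_pos B).
  assert (0 < Rmin m (r / 2)) by (apply Rmin_pos; lra).
  assert (Hd : 0 < d) by (apply Rmin_pos; [lra | apply Rdiv_lt_0_compat; lra]).
  assert (d <= Rmin m (r / 2) / 2) by apply Rmin_l.
  assert (d <= eps / (8 * (Rabs B + 1))) by apply Rmin_r.
  eapply Rle_trans; [apply (Hsmall d); lra|].
  apply Rle_trans with (8 * (eps / (8 * (Rabs B + 1))) * (Rabs B + 1)).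
  - apply Rmult_le_compat_r; lra.
  - right; field; lra.
Qed.

Definition holo_on_rect_except2 (h : C -> C) (p q : C) (x0 x3 y0 y3 : R) : Prop :=
  forall z, x0 <= fst z <= x3 -> y0 <= snd z <= y3 -> z <> p -> z <> q -> holo1_at h z.

Lemma rect_integral_two_singularities_x (h : C -> C) (p q : C) (x0 x3 y0 y3 : R) :
  x0 < fst p -> fst p < fst q -> fst q < x3 -> y0 < snd p < y3 -> y0 < snd q < y3 ->
  holo_on_rect_except2 h p q x0 x3 y0 y3 -> bounded_near h p -> bounded_near h q ->
  rect_integral h x0 x3 y0 y3 = 0%C.
Proof.
  intros ? ? ? ? ? Hh Bp Bq. set (m := (fst p + fst q) / 2).
  assert (Hcont : forall a b, x0 <= a <= b -> b <= x3 ->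
    (forall z, rect_boundary a b y0 y3 z -> z <> p /\ z <> q) ->
    continuous_on_rect_boundary h a b y0 y3).
  { intros a b ? ? Hav z Hz. destruct (rect_boundary_in_rect a b y0 y3 z ltac:(lra) ltac:(lra) Hz).
    destruct (Hav z Hz). apply holo1_at_continuous, Hh; auto; lra. }
  assert (Hl : continuous_on_rect_boundary h x0 m y0 y3).
  { apply Hcont; try (unfold m; lra). intros z Hz.
    split; [apply (rect_boundary_avoid x0 m y0 y3); auto; unfold m; lra|].
    intros ->. unfold m in *. destruct Hz as [[? [E | E]] | [? [E | E]]]; lra. }
  assert (Hr : continuous_on_rect_boundary h m x3 y0 y3).
  { apply Hcont; try (unfold m; lra). intros z Hz.
    split; [|apply (rect_boundary_avoid m x3 y0 y3); auto; unfold m; lra].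
    intros ->. unfold m in *. destruct Hz as [[? [E | E]] | [? [E | E]]]; lra. }
  rewrite (rect_integral_split_x h x0 m x3) by (auto; unfold m; lra).
  rewrite (rect_integral_bounded_singularity h p x0 m y0 y3),
    (rect_integral_bounded_singularity h q m x3 y0 y3); try ring; auto; try (unfold m; lra);
    intros z ? ? ?; unfold m in *; apply Hh; auto; try (split; lra); intros ->; lra.
Qed.

Lemma rect_integral_two_singularities_y (h : C -> C) (p q : C) (x0 x3 y0 y3 : R) :
  x0 < fst p < x3 -> x0 < fst q < x3 -> y0 < snd p -> snd p < snd q -> snd q < y3 ->
  holo_on_rect_except2 h p q x0 x3 y0 y3 -> bounded_near h p -> bounded_near h q ->
  rect_integral h x0 x3 y0 y3 = 0%C.
Proof.
  intros ? ? ? ? ? Hh Bp Bq. set (m := (snd p + snd q) / 2).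
  assert (Hcont : forall c d, y0 <= c <= d -> d <= y3 ->
    (forall z, rect_boundary x0 x3 c d z -> z <> p /\ z <> q) ->
    continuous_on_rect_boundary h x0 x3 c d).
  { intros c d ? ? Hav z Hz. destruct (rect_boundary_in_rect x0 x3 c d z ltac:(lra) ltac:(lra) Hz).
    destruct (Hav z Hz). apply holo1_at_continuous, Hh; auto; lra. }
  assert (Hl : continuous_on_rect_boundary h x0 x3 y0 m).
  { apply Hcont; try (unfold m; lra). intros z Hz.
    split; [apply (rect_boundary_avoid x0 x3 y0 m); auto; unfold m; lra|].
    intros ->. unfold m in *. destruct Hz as [[? [E | E]] | [? [E | E]]]; lra. }
  assert (Hr : continuous_on_rect_boundary h x0 x3 m y3).
  { apply Hcont; try (unfold m; lra). intros z Hz.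
    split; [|apply (rect_boundary_avoid x0 x3 m y3); auto; unfold m; lra].
    intros ->. unfold m in *. destruct Hz as [[? [E | E]] | [? [E | E]]]; lra. }
  rewrite (rect_integral_split_y h x0 x3 y0 m y3) by (auto; unfold m; lra).
  rewrite (rect_integral_bounded_singularity h p x0 x3 y0 m),
    (rect_integral_bounded_singularity h q x0 x3 m y3); try ring; auto; try (unfold m; lra);
    intros z ? ? ?; unfold m in *; apply Hh; auto; try (split; lra); intros ->; lra.
Qed.

Lemma rect_integral_two_singularities (h : C -> C) (p q : C) (x0 x3 y0 y3 : R) :
  x0 < fst p < x3 -> y0 < snd p < y3 -> x0 < fst q < x3 -> y0 < snd q < y3 -> p <> q ->
  holo_on_rect_except2 h p q x0 x3 y0 y3 -> bounded_near h p -> bounded_near h q ->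
  rect_integral h x0 x3 y0 y3 = 0%C.
Proof.
  intros ? ? ? ? Hpq Hh Bp Bq.
  assert (Hh' : holo_on_rect_except2 h q p x0 x3 y0 y3) by (intros z ? ? ? ?; apply Hh; auto).
  destruct (Rtotal_order (fst p) (fst q)) as [Lt | [Eq | Gt]].
  - apply (rect_integral_two_singularities_x h p q); auto; lra.
  - destruct (Rtotal_order (snd p) (snd q)) as [Lt' | [Eq' | Gt']].
    + apply (rect_integral_two_singularities_y h p q); auto; lra.
    + destruct p, q. simpl in *. subst. tauto.
    + apply (rect_integral_two_singularities_y h q p); auto; lra.
  - apply (rect_integral_two_singularities_x h q p); auto; lra.
Qed.

(** * Cauchy's formula and Liouville's theorem on C* *)

Lemma holo1_at_diff_quotient_bounded (f : C -> C) (a : C) :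
  holo1_at f a -> bounded_near (fun z => (f z - f a) * / (z - a))%C a.
Proof.
  intros [al Hal]. destruct (Hal 1 Rlt_0_1) as [r [Hr Hd]].
  exists (Cmod al + 1), r. split; auto. intros z Hz Hzr.
  assert (Hza : (z - a)%C <> 0%C) by (apply Cminus_eq_contra; auto).
  assert (Hza' : 0 < Cmod (z - a)%C) by (apply Cmod_gt_0; auto).
  specialize (Hd (z - a)%C Hzr). replace (a + (z - a))%C with z in Hd by ring.
  rewrite Cmod_mult, Cmod_inv by auto.
  pose proof (Cmod_triangle (f z - f a - al * (z - a))%C (al * (z - a))%C) as T.
  replace (f z - f a - al * (z - a) + al * (z - a))%C with (f z - f a)%C in T by ring.
  rewrite Cmod_mult in T.
  apply Rle_trans with ((Cmod al + 1) * Cmod (z - a)%C * / Cmod (z - a)%C).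
  - apply Rmult_le_compat_r; [apply Rlt_le, Rinv_0_lt_compat; auto | lra].
  - right. field. lra.
Qed.

Lemma Cmod_ge_on_square_boundary (rho : R) (z : C) : 0 <= rho ->
  rect_boundary (- rho) rho (- rho) rho z -> rho <= Cmod z.
Proof.
  intros Hr Hz. destruct (Rabs_re_im_le_Cmod z).
  destruct Hz as [[? [E | E]] | [? [E | E]]]; rewrite E in *;
    rewrite ?Rabs_Ropp, ?Rabs_right in * by lra; lra.
Qed.

Section BoundedOnCstar.
Variables (phi : C -> C) (M : R).
Hypothesis Hphi : forall z : C, z <> 0%C -> holo1_at phi z.
Hypothesis HM : forall z : C, z <> 0%C -> Cmod (phi z) <= M.

Let inside_square (rho : R) (a : C) : Prop := Rabs (fst a) < rho /\ Rabs (snd a) < rho.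

Let square_boundary_avoid (rho : R) (a z : C) : inside_square rho a ->
  rect_boundary (- rho) rho (- rho) rho z -> z <> a.
Proof.
  intros [H1 H2]. apply Rabs_def2 in H1, H2. apply rect_boundary_avoid; lra.
Qed.

Let origin_inside (rho : R) (a : C) : inside_square rho a -> inside_square rho 0%C.
Proof.
  intros [H1 _]. pose proof (Rabs_pos (fst a)).
  unfold inside_square. simpl. rewrite Rabs_R0. split; lra.
Qed.

Let diff_quotient_bounded_near_0 (a : C) : a <> 0%C ->
  bounded_near (fun z => (phi z - phi a) * / (z - a))%C 0%C.
Proof.
  intros Ha. exists ((M + Cmod (phi a)) * (2 / Cmod a)), (Cmod a / 2).
  assert (0 < Cmod a) by (apply Cmod_gt_0; auto).
  split; [lra|]. intros z Hz0 Hz. replace (z - 0)%C with z in Hz by ring.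
  assert (Hza : Cmod a / 2 <= Cmod (z - a)%C).
  { rewrite Cmod_sub_sym. pose proof (Cmod_sub_ge a z). lra. }
  rewrite Cmod_mult, Cmod_inv by (intro E; rewrite E, Cmod_0 in Hza; lra).
  apply Rmult_le_compat; [apply Cmod_ge_0 | apply Rlt_le, Rinv_0_lt_compat; lra | |].
  - eapply Rle_trans; [apply Cmod_triangle|]. rewrite Cmod_opp. pose proof (HM z Hz0). lra.
  - replace (2 / Cmod a) with (/ (Cmod a / 2)) by (field; lra). apply Rinv_le_contravar; lra.
Qed.

(* The difference quotient at a is bounded near 0, where phi is bounded, and near a, where phi is
   differentiable; hence its integral vanishes and only the pole of phi(a)/(z - a) contributes. *)
Lemma cauchy_formula_square (a : C) (rho : R) : a <> 0%C -> inside_square rho a ->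
  rect_integral (fun z => phi z * / (z - a))%C (- rho) rho (- rho) rho = (2 * PI * Ci * phi a)%C.
Proof.
  intros Ha Hin. pose proof (origin_inside rho a Hin) as Hin0.
  pose proof Hin as [Ha1 Ha2]. apply Rabs_def2 in Ha1, Ha2.
  set (g := fun z => ((phi z - phi a) * / (z - a))%C).
  assert (Hbd : forall z, rect_boundary (- rho) rho (- rho) rho z -> z <> 0%C /\ z <> a)
    by (intros; split; eapply square_boundary_avoid; eauto).
  assert (Hg : continuous_on_rect_boundary g (- rho) rho (- rho) rho).
  { intros z Hz. destruct (Hbd z Hz). apply holo1_at_continuous, holo1_at_mult.
    - apply holo1_at_minus; [auto | apply holo1_at_const].
    - apply holo1_at_inv_sub; auto. }
  assert (Hv : continuous_on_rect_boundary (fun z => / (z - a))%C (- rho) rho (- rho) rho).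
  { intros z Hz. destruct (Hbd z Hz). apply holo1_at_continuous, holo1_at_inv_sub; auto. }
  assert (Hw : continuous_on_rect_boundary (fun z => phi a * / (z - a))%C (- rho) rho (- rho) rho).
  { intros z Hz. destruct (Hbd z Hz).
    apply holo1_at_continuous, holo1_at_scal, holo1_at_inv_sub; auto. }
  rewrite (rect_integral_ext (- rho) rho (- rho) rho ltac:(lra) ltac:(lra) _
             (fun z => g z + phi a * / (z - a))%C)
    by (intros z Hz; destruct (Hbd z Hz); unfold g; field; apply Cminus_eq_contra; auto).
  rewrite rect_integral_plus, rect_integral_scal by (auto; lra).
  rewrite (rect_integral_inv_sub a) by lra.
  rewrite (rect_integral_two_singularities g 0%C a); simpl; try lra; auto.
  - ring.
  - intros z _ _ Hz0 Hza. apply holo1_at_mult.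
    + apply holo1_at_minus; [auto | apply holo1_at_const].
    + apply holo1_at_inv_sub; auto.
  - apply diff_quotient_bounded_near_0, Ha.
  - apply holo1_at_diff_quotient_bounded, Hphi, Ha.
Qed.

Let kernel_continuous (a : C) (rho : R) : inside_square rho a ->
  continuous_on_rect_boundary (fun z => phi z * / (z - a))%C (- rho) rho (- rho) rho.
Proof.
  intros Hin z Hz. pose proof (square_boundary_avoid rho a z Hin Hz).
  pose proof (square_boundary_avoid rho 0%C z (origin_inside rho a Hin) Hz).
  apply holo1_at_continuous, holo1_at_mult; [auto | apply holo1_at_inv_sub; auto].
Qed.

Let inside_large_square (a : C) (rho : R) : 2 * Cmod a < rho -> inside_square rho a.
Proof. intros H. destruct (Rabs_re_im_le_Cmod a). pose proof (Cmod_ge_0 a). split; lra. Qed.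

Let kernel_difference_bound (a b : C) (rho : R) (z : C) :
  2 * Cmod a < rho -> 2 * Cmod b < rho -> rect_boundary (- rho) rho (- rho) rho z ->
  Cmod (phi z * / (z - a) - phi z * / (z - b))%C
    <= Rabs M * Cmod (a - b)%C * (2 / rho) * (2 / rho).
Proof.
  intros Ha Hb Hz. pose proof (Cmod_ge_0 a). pose proof (Cmod_ge_0 b).
  pose proof (Cmod_ge_on_square_boundary rho z ltac:(lra) Hz).
  assert (Hfar : forall w, 2 * Cmod w < rho -> rho / 2 <= Cmod (z - w)%C /\ (z - w)%C <> 0%C).
  { intros w Hw. pose proof (Cmod_ge_0 w). pose proof (Cmod_sub_ge z w). split; [lra|].
    intro E. rewrite E, Cmod_0 in *. lra. }
  destruct (Hfar a Ha) as [Da Na], (Hfar b Hb) as [Db Nb].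
  replace (phi z * / (z - a) - phi z * / (z - b))%C
    with (phi z * (a - b) * (/ (z - a) * / (z - b)))%C by (field; auto).
  rewrite !Cmod_mult, !Cmod_inv by auto.
  assert (Cmod (phi z) <= Rabs M).
  { eapply Rle_trans; [apply HM | apply Rle_abs]. intro E. rewrite E, Cmod_0 in *. lra. }
  assert (/ Cmod (z - a)%C <= 2 / rho /\ / Cmod (z - b)%C <= 2 / rho) as [Ia Ib].
  { replace (2 / rho) with (/ (rho / 2)) by (field; lra). split; apply Rinv_le_contravar; lra. }
  assert (0 <= / Cmod (z - a)%C /\ 0 <= / Cmod (z - b)%C) as [Pa Pb]
    by (split; apply Rlt_le, Rinv_0_lt_compat; lra).
  pose proof (Cmod_ge_0 (phi z)). pose proof (Cmod_ge_0 (a - b)%C).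
  replace (Rabs M * Cmod (a - b)%C * (2 / rho) * (2 / rho))
    with (Rabs M * Cmod (a - b)%C * ((2 / rho) * (2 / rho))) by ring.
  apply Rmult_le_compat; [nra | nra | apply Rmult_le_compat_r; lra | apply Rmult_le_compat; lra].
Qed.

(* Liouville: for large rho, 2 pi (phi a - phi b) is the integral of
   phi(z) (a - b) / ((z - a)(z - b)), which is O(1/rho). *)
Theorem bounded_holo_Cstar_const (a b : C) : a <> 0%C -> b <> 0%C -> phi a = phi b.
Proof.
  intros Ha Hb. apply Ceq_minus, C_eq_0_of_small. intros eps Heps.
  set (X := 32 * Rabs M * Cmod (a - b)%C).
  assert (HX : 0 <= X) by (pose proof (Rabs_pos M); pose proof (Cmod_ge_0 (a - b)%C); unfold X; nra).
  pose proof (Cmod_ge_0 a); pose proof (Cmod_ge_0 b).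
  set (rho := 2 * (Cmod a + Cmod b) + 1 + X / eps).
  assert (HXe : 0 <= X / eps) by (apply Rdiv_le_0_compat; lra).
  assert (Hrho : 2 * (Cmod a + Cmod b) + 1 <= rho) by (unfold rho; lra).
  assert (Hdiff : rect_integral (fun z => phi z * / (z - a) - phi z * / (z - b))%C
                                (- rho) rho (- rho) rho
                  = (2 * PI * Ci * (phi a - phi b))%C).
  { rewrite rect_integral_minus by (try lra; apply kernel_continuous, inside_large_square; lra).
    rewrite !cauchy_formula_square by (auto; apply inside_large_square; lra). ring. }
  assert (Hbound : Cmod (rect_integral (fun z => phi z * / (z - a) - phi z * / (z - b))%C
                                       (- rho) rho (- rho) rho) <= X / rho).
  { replace (X / rho) with (2 * ((rho - - rho) + (rho - - rho))
                            * (Rabs M * Cmod (a - b)%C * (2 / rho) * (2 / rho)))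
      by (unfold X; field; lra).
    apply rect_integral_norm_le; try lra.
    - intros z Hz. apply holo1_at_continuous, holo1_at_minus; apply holo1_at_mult;
        try apply Hphi; try apply holo1_at_inv_sub; eapply square_boundary_avoid; eauto;
        try apply (origin_inside rho a); apply inside_large_square; lra.
    - intros z Hz. apply kernel_difference_bound; auto; lra. }
  assert (H2pi : Cmod (2 * PI * Ci)%C = 2 * PI).
  { rewrite !Cmod_mult, Cmod_Ci, !Cmod_R, !Rabs_right by (pose proof PI_RGT_0; lra). ring. }
  rewrite Hdiff, Cmod_mult, H2pi in Hbound.
  assert (Hsmall : X / rho <= eps).
  { assert (HXr : X / eps <= rho) by (unfold rho; lra).
    apply (Rmult_le_compat_r eps) in HXr; [|lra].
    replace (X / eps * eps) with X in HXr by (field; lra).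
    unfold Rdiv. apply (Rmult_le_reg_r rho); [lra|].
    rewrite Rmult_assoc, Rinv_l, Rmult_1_r by lra. nra. }
  pose proof PI2_3_2. pose proof (Cmod_ge_0 (phi a - phi b)%C). nra.
Qed.

End BoundedOnCstar.

(** * Holomorphic functions on C* invariant under z |-> c z *)

Lemma continuous_on_rect_bounded (h : C -> C) (a b c d : R) : a <= b -> c <= d ->
  (forall z, a <= fst z <= b -> c <= snd z <= d -> Ccontinuous_at h z) ->
  exists M, forall z, a <= fst z <= b -> c <= snd z <= d -> Cmod (h z) <= M.
Proof.
  intros Hab Hcd Hh.
  apply (rect_bisection (fun a' b' c' d' =>
    exists M, forall z, a' <= fst z <= b' -> c' <= snd z <= d' -> Cmod (h z) <= M)); auto.
  - intros a' b' c' d' _ _ _ _ m n [M1 F1] [M2 F2] [M3 F3] [M4 F4].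
    exists (Rmax (Rmax M1 M2) (Rmax M3 M4)). intros z Hx Hy.
    pose proof (Rmax_l (Rmax M1 M2) (Rmax M3 M4)); pose proof (Rmax_r (Rmax M1 M2) (Rmax M3 M4)).
    pose proof (Rmax_l M1 M2); pose proof (Rmax_r M1 M2).
    pose proof (Rmax_l M3 M4); pose proof (Rmax_r M3 M4).
    destruct (Rle_lt_dec (fst z) m), (Rle_lt_dec (snd z) n).
    + pose proof (F1 z ltac:(lra) ltac:(lra)). lra.
    + pose proof (F3 z ltac:(lra) ltac:(lra)). lra.
    + pose proof (F2 z ltac:(lra) ltac:(lra)). lra.
    + pose proof (F4 z ltac:(lra) ltac:(lra)). lra.
  - intros u v Hu Hv. destruct (Hh (u, v) Hu Hv 1 Rlt_0_1) as [del [Hdel Hd]].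
    exists (del / 2). split; [lra|]. intros a' b' c' d' ? ? ? ? ? ?.
    exists (Cmod (h (u, v)) + 1). intros z ? ?.
    assert (Cmod (z - (u, v))%C < del).
    { eapply Rle_lt_trans; [apply Cmod_sub_le_Rabs|]. simpl.
      assert (Rabs (fst z - u) <= b' - a') by (apply Rabs_le; lra).
      assert (Rabs (snd z - v) <= d' - c') by (apply Rabs_le; lra). lra. }
    pose proof (Hd z ltac:(auto)).
    pose proof (Cmod_triangle (h z - h (u, v))%C (h (u, v))) as T.
    replace (h z - h (u, v) + h (u, v))%C with (h z) in T by ring. lra.
Qed.

Lemma Cmod_scal_powerRZ (c : R) (n : Z) (z : C) : 0 < c -> z <> 0%C ->
  Cmod (powerRZ c n * z)%C = exp (IZR n * ln c + ln (Cmod z)).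
Proof.
  intros Hc Hz. assert (0 < Cmod z) by (apply Cmod_gt_0; auto).
  rewrite Cmod_scal by (apply Rlt_le, powerRZ_lt; lra).
  rewrite powerRZ_Rpower by lra. unfold Rpower.
  rewrite exp_plus, exp_ln; auto.
Qed.

Section Invariant.
Variables (phi : C -> C) (c : R).
Hypothesis Hc : 1 < c.
Hypothesis Hphi : forall z : C, z <> 0%C -> holo1_at phi z.
Hypothesis Hinv : forall z : C, z <> 0%C -> phi (c * z)%C = phi z.

Lemma invariant_powerRZ (n : Z) (z : C) : z <> 0%C -> phi (powerRZ c n * z)%C = phi z.
Proof.
  intros Hz.
  assert (Hnat : forall (k : nat) (w : C), w <> 0%C -> phi (RtoC (c ^ k) * w)%C = phi w).
  { induction k as [|k IH]; intros w Hw.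
    - f_equal. Ceq.
    - replace (RtoC (c ^ S k) * w)%C with (c * (RtoC (c ^ k) * w))%C by Ceq.
      rewrite Hinv; [apply IH, Hw|].
      apply Cmult_neq_0; [apply RtoC_neq_0, pow_nonzero; lra | exact Hw]. }
  destruct n as [|k|k]; simpl.
  - f_equal. Ceq.
  - apply Hnat, Hz.
  - assert (Hck : c ^ Pos.to_nat k <> 0) by (apply pow_nonzero; lra).
    rewrite <- (Hnat (Pos.to_nat k) (RtoC (/ c ^ Pos.to_nat k) * z)%C).
    + f_equal. Ceq; auto.
    + apply Cmult_neq_0; [apply RtoC_neq_0, Rinv_neq_0_compat, Hck | exact Hz].
Qed.

(* With t = - log_c |z|, scaling by c ^ (up t) moves z into the annulus 1 < |z| <= c. *)
Lemma invariant_reduce_to_annulus (z : C) : z <> 0%C ->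
  exists z', 1 < Cmod z' <= c /\ phi z' = phi z.
Proof.
  intros Hz. assert (Hlc : 0 < ln c) by (rewrite <- ln_1; apply ln_increasing; lra).
  set (t := - ln (Cmod z) / ln c).
  destruct (archimed t) as [Ht1 Ht2].
  exists (powerRZ c (up t) * z)%C. split; [|apply invariant_powerRZ, Hz].
  rewrite Cmod_scal_powerRZ by (auto; lra).
  replace (IZR (up t) * ln c + ln (Cmod z)) with ((IZR (up t) - t) * ln c) by (unfold t; field; lra).
  split.
  - rewrite <- exp_0. apply exp_increasing. apply Rmult_lt_0_compat; lra.
  - apply Rle_trans with (exp (ln c)); [|rewrite exp_ln; lra].
    destruct (Req_dec (IZR (up t) - t) 1) as [E | E].
    + rewrite E, Rmult_1_l. lra.
    + apply Rlt_le, exp_increasing. nra.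
Qed.

Lemma invariant_bounded : exists M, forall z : C, z <> 0%C -> Cmod (phi z) <= M.
Proof.
  assert (Hrect : forall a b c' d, a <= b -> c' <= d ->
            (1 / 2 <= a \/ b <= - (1 / 2) \/ 1 / 2 <= c' \/ d <= - (1 / 2)) ->
            exists M, forall z, a <= fst z <= b -> c' <= snd z <= d -> Cmod (phi z) <= M).
  { intros a b c' d ? ? Hout. apply continuous_on_rect_bounded; auto.
    intros z ? ?. apply holo1_at_continuous, Hphi. intros E. rewrite E in *. simpl in *. lra. }
  destruct (Hrect (1 / 2) c (- c) c) as [M1 B1]; try lra.
  destruct (Hrect (- c) (- (1 / 2)) (- c) c) as [M2 B2]; try lra.
  destruct (Hrect (- c) c (1 / 2) c) as [M3 B3]; try lra.
  destruct (Hrect (- c) c (- c) (- (1 / 2))) as [M4 B4]; try lra.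
  exists (Rmax (Rmax M1 M2) (Rmax M3 M4)). intros z Hz.
  destruct (invariant_reduce_to_annulus z Hz) as [z' [[H1 H2] <-]].
  pose proof (Rmax_l (Rmax M1 M2) (Rmax M3 M4)); pose proof (Rmax_r (Rmax M1 M2) (Rmax M3 M4)).
  pose proof (Rmax_l M1 M2); pose proof (Rmax_r M1 M2).
  pose proof (Rmax_l M3 M4); pose proof (Rmax_r M3 M4).
  pose proof (Cmod_le_Rabs_re_im z'). destruct (Rabs_re_im_le_Cmod z') as [Hx Hy].
  apply Rabs_le_between in Hx, Hy; [| lra ..].
  destruct (Rle_lt_dec (1 / 2) (Rabs (fst z'))) as [Fx | Fx].
  - destruct (Rle_lt_dec 0 (fst z')).
    + rewrite Rabs_right in Fx by lra. pose proof (B1 z' ltac:(lra) ltac:(lra)). lra.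
    + rewrite Rabs_left in Fx by lra. pose proof (B2 z' ltac:(lra) ltac:(lra)). lra.
  - assert (Fy : 1 / 2 <= Rabs (snd z')) by lra.
    destruct (Rle_lt_dec 0 (snd z')).
    + rewrite Rabs_right in Fy by lra. pose proof (B3 z' ltac:(lra) ltac:(lra)). lra.
    + rewrite Rabs_left in Fy by lra. pose proof (B4 z' ltac:(lra) ltac:(lra)). lra.
Qed.

Theorem invariant_holo_Cstar_const (a b : C) : a <> 0%C -> b <> 0%C -> phi a = phi b.
Proof.
  destruct invariant_bounded as [M HM].
  apply (bounded_holo_Cstar_const phi M Hphi HM).
Qed.

End Invariant.

(** * Invariant functions on G *)

Lemma holo2_at_value_from_scaled (f : C -> C -> C) (c : R) (a b K : C) : 1 < c ->
  holo2_at f 0%C 0%C -> (forall n : nat, f (RtoC (/ c ^ n) * a)%C (RtoC (/ c ^ n) * b)%C = K) ->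
  f 0%C 0%C = K.
Proof.
  intros Hc Hf HK. symmetry. apply Ceq_minus, C_eq_0_of_small. intros e He.
  destruct (holo2_at_continuous f 0%C 0%C Hf e He) as [d [Hd Hcont]].
  destruct (pow_inv_small c (Cmod a + Cmod b) d Hc Hd) as [n Hn].
  assert (Hcn : 0 < / c ^ n) by (apply Rinv_0_lt_compat, pow_lt; lra).
  pose proof (Cmod_ge_0 a); pose proof (Cmod_ge_0 b).
  assert (Hsmall : forall w, Cmod w <= Cmod a + Cmod b -> Cmod (RtoC (/ c ^ n) * w)%C < d).
  { intros w Hw. rewrite Cmod_scal by lra. eapply Rle_lt_trans; [|exact Hn].
    unfold Rdiv. rewrite Rmult_comm. apply Rmult_le_compat_r; lra. }
  specialize (Hcont _ _ (Hsmall a ltac:(lra)) (Hsmall b ltac:(lra))).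
  rewrite !Cplus_0_l, HK in Hcont. lra.
Qed.

Lemma chart_true_0 : chart true 0%C = Inf.
Proof. unfold chart. destruct Ceq_dec; congruence. Qed.

Lemma chart_true_neq_0 (u : C) : u <> 0%C -> chart true u = Fin (/ u)%C.
Proof. unfold chart. destruct Ceq_dec; congruence. Qed.

Lemma Fin_inj (z w : C) : Fin z = Fin w -> z = w.
Proof. congruence. Qed.

Lemma scale_neq (r : R) (p q : Chat) : 0 < r -> p <> q -> scale r p <> scale r q.
Proof.
  intros Hr Hpq. destruct p as [z|], q as [w|]; simpl; try congruence.
  intros E. apply Hpq. f_equal. apply Fin_inj in E.
  replace z with (RtoC (/ r) * (r * z))%C by (Ceq; apply Rgt_not_eq; lra).
  rewrite E. Ceq; apply Rgt_not_eq; lra.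
Qed.

Lemma ratio_scale (r : R) (p q : Chat) : 0 < r -> p <> q -> ratio (scale r p) (scale r q) = ratio p q.
Proof.
  intros Hr Hpq. destruct p as [z|], q as [w|]; simpl; auto.
  assert (Hzw : (z - w)%C <> 0%C) by (apply Cminus_eq_contra; congruence).
  assert (RtoC r <> 0%C) by (apply RtoC_neq_0; lra).
  unfold Cdiv. replace (r * z - r * w)%C with (r * (z - w))%C by ring.
  field. auto.
Qed.

Section InvariantOnG.
Variables (c : R) (F : Chat -> Chat -> C).
Hypothesis Hc : 1 < c.
Hypothesis hF : holomorphic_on_G F.
Hypothesis Hinv : forall (n : Z) (p q : Chat), p <> q ->
  F (scale (powerRZ c n) p) (scale (powerRZ c n) q) = F p q.

Let Hup (n : nat) (p q : Chat) : p <> q -> F (scale (c ^ n) p) (scale (c ^ n) q) = F p q.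
Proof. rewrite pow_powerRZ. apply Hinv. Qed.

Let Hdown (n : nat) (p q : Chat) : p <> q -> F (scale (/ c ^ n) p) (scale (/ c ^ n) q) = F p q.
Proof. rewrite pow_powerRZ, <- powerRZ_neg'. apply Hinv. Qed.

Let Fin_neq (z w : C) : z <> w -> Fin z <> Fin w.
Proof. congruence. Qed.

(* (1 + t, t) is the point of G with ratio t on the affine chart. *)
Definition ratio_section (t : C) : C := F (Fin (1 + t)%C) (Fin t).

Lemma ratio_section_entire : entire ratio_section.
Proof.
  intros t. apply (holo1_at_ext (fun s => F (chart false (1 + 1 * s)%C) (chart false (0 + 1 * s)%C))).
  { intros s. unfold ratio_section. simpl. f_equal; f_equal; ring. }
  apply (holo2_at_line (fun u v => F (chart false u) (chart false v))).
  apply hF. simpl. intros E. apply Fin_inj, (f_equal fst) in E. simpl in E. lra.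
Qed.

Lemma invariant_finite (z w : C) : z <> w -> F (Fin z) (Fin w) = ratio_section (w / (z - w))%C.
Proof.
  intros Hzw. assert (Hd : (z - w)%C <> 0%C) by (apply Cminus_eq_contra, Hzw).
  set (phi := fun mu => F (Fin (z * mu)%C) (Fin (w * mu)%C)).
  assert (Hsep : forall mu : C, mu <> 0%C -> Fin (z * mu)%C <> Fin (w * mu)%C).
  { intros mu Hmu. apply Fin_neq. intros E. apply (Cmult_neq_0 _ _ Hd Hmu).
    replace ((z - w) * mu)%C with (z * mu - w * mu)%C by ring. rewrite E. ring. }
  assert (Hphi : forall mu : C, mu <> 0%C -> holo1_at phi mu).
  { intros mu Hmu.
    apply (holo1_at_ext (fun s => F (chart false (0 + z * s)%C) (chart false (0 + w * s)%C))).
    { intros s. unfold phi. simpl. f_equal; f_equal; ring. }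
    apply (holo2_at_line (fun u v => F (chart false u) (chart false v))), hF. simpl.
    replace (0 + z * mu)%C with (z * mu)%C by ring. replace (0 + w * mu)%C with (w * mu)%C by ring.
    auto. }
  assert (Hcphi : forall mu : C, mu <> 0%C -> phi (c * mu)%C = phi mu).
  { intros mu Hmu. unfold phi. rewrite <- (Hup 1 _ _ (Hsep mu Hmu)). simpl.
    f_equal; f_equal; Ceq. }
  assert (Hinv_d : (/ (z - w))%C <> 0%C)
    by (intros E; apply C1_nz; rewrite <- (Cinv_r (z - w)%C Hd), E; ring).
  pose proof (invariant_holo_Cstar_const phi c Hc Hphi Hcphi 1%C (/ (z - w))%C C1_nz Hinv_d) as E.
  unfold phi, ratio_section in *. rewrite !Cmult_1_r in E. rewrite E.
  f_equal; f_equal; unfold Cdiv; field; auto.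
Qed.

Lemma invariant_fin_inf (z : C) : F (Fin z) Inf = ratio_section (-1)%C.
Proof.
  set (f := fun u v => F (chart false u) (chart true v)).
  assert (Hf : holo2_at f 0%C 0%C) by (apply hF; rewrite chart_true_0; discriminate).
  assert (E1 : f 0%C 0%C = F (Fin z) Inf).
  { apply (holo2_at_value_from_scaled f c z 0%C); auto. intros n. unfold f.
    rewrite Cmult_0_r, chart_true_0. apply (Hdown n (Fin z) Inf). discriminate. }
  assert (E2 : f 0%C 0%C = F (Fin 0%C) (Fin (-1)%C)).
  { apply (holo2_at_value_from_scaled f c 0%C (-1)%C); auto. intros n. unfold f.
    assert (Hcn : / c ^ n <> 0) by (apply Rinv_neq_0_compat, pow_nonzero; lra).
    assert (Hm1 : RtoC (-1) <> RtoC 0) by (apply RtoC_neq_0; lra).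
    rewrite chart_true_neq_0 by (apply Cmult_neq_0; [apply RtoC_neq_0, Hcn | exact Hm1]).
    rewrite <- (Hup n (Fin 0%C) (Fin (-1)%C))
      by (apply Fin_neq; intros E; apply (f_equal fst) in E; simpl in E; lra).
    simpl. f_equal; f_equal; Ceq; auto; apply pow_nonzero; lra. }
  rewrite <- E1, E2. unfold ratio_section. f_equal. f_equal. ring.
Qed.

Lemma invariant_inf_fin (w : C) : F Inf (Fin w) = ratio_section 0%C.
Proof.
  set (f := fun u v => F (chart true u) (chart false v)).
  assert (Hf : holo2_at f 0%C 0%C) by (apply hF; rewrite chart_true_0; discriminate).
  assert (E1 : f 0%C 0%C = F Inf (Fin w)).
  { apply (holo2_at_value_from_scaled f c 0%C w); auto. intros n. unfold f.
    rewrite Cmult_0_r, chart_true_0. apply (Hdown n Inf (Fin w)). discriminate. }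
  assert (E2 : f 0%C 0%C = F (Fin 1%C) (Fin 0%C)).
  { apply (holo2_at_value_from_scaled f c 1%C 0%C); auto. intros n. unfold f.
    assert (Hcn : / c ^ n <> 0) by (apply Rinv_neq_0_compat, pow_nonzero; lra).
    rewrite chart_true_neq_0 by (apply Cmult_neq_0; [apply RtoC_neq_0, Hcn | apply C1_nz]).
    rewrite <- (Hup n (Fin 1%C) (Fin 0%C)) by (apply Fin_neq, C1_nz).
    simpl. f_equal; f_equal; Ceq; auto; apply pow_nonzero; lra. }
  rewrite <- E1, E2. unfold ratio_section. f_equal. f_equal. ring.
Qed.

End InvariantOnG.

Theorem mainTheorem13 (c : R) (hc : 1 < c) (F : Chat -> Chat -> C)
  (hF : holomorphic_on_G F) :
  (forall (n : Z) (p q : Chat), p <> q ->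
     F (scale (powerRZ c n) p) (scale (powerRZ c n) q) = F p q)
  <->
  (exists g : C -> C, entire g /\
     forall p q : Chat, p <> q -> F p q = g (ratio p q)).
Proof.
  split.
  - intros Hinv. exists (ratio_section F). split; [apply ratio_section_entire, hF|].
    intros [z|] [w|] Hpq; simpl.
    + apply (invariant_finite c); auto. congruence.
    + apply (invariant_fin_inf c); auto.
    + apply (invariant_inf_fin c); auto.
    + contradiction.
  - intros [g [_ Hg]] n p q Hpq.
    assert (Hr : 0 < powerRZ c n) by (apply powerRZ_lt; lra).
    rewrite !Hg by auto using scale_neq. f_equal. apply ratio_scale; auto.
Qed.
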